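(* Let $W$ be a weighing matrix of order $n$ and weight $k$ with $i$-th column $w_i$, and set $C_i=w_iw_i^T$ for $1\le i\le n$. Let $t\ge n$ and let $L=(l(i,j))_{i,j=1}^t$ be a Latin square of side $t$ on the symbol set $\{1,\dots,t\}$. If $t>n$, set $C_i=O$ (the $n\times n$ zero matrix) for $n+1\le i\le t$. Then the $tn\times tn$ block matrix $\widetilde W=(C_{l(i,j)})_{i,j=1}^t$, whose $(i,j)$ block is $C_{l(i,j)}$, is a weighing matrix of order $tn$ and weight $k^2$.
   Context: A weighing matrix of order $n$ and weight $k$ is an $n\times n$ matrix $W$ with entries in $\{1,-1,0\}$ such that $WW^T=kI_n$. A Latin square of side $t$ on symbol set $\{1,\dots,t\}$ is a $t\times t$ array in which each cell contains one symbol and each symbol occurs exactly once in each row and exactly once in each column. *)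

From mathcomp Require Import all_boot all_order all_algebra.
Set Implicit Arguments. Unset Strict Implicit. Unset Printing Implicit Defensive.
Import GRing.Theory Num.Theory.
Local Open Scope ring_scope.

Definition is_weighing (m : nat) (M : 'M[int]_m) (k : nat) : Prop :=
  (forall i j, M i j \in [:: 1; -1; 0]) /\ M *m M^T = (k%:Z)%:M.

(* Latin square of side t, symbols {1..t} encoded as 'I_t (symbol s <-> s+1):
   each symbol occurs exactly once in each row and in each column. *)
Definition latin_square (t : nat) (L : 'M['I_t]_t) : Prop :=
  (forall i s, #|[set j | L i j == s]| = 1%N) /\
  (forall j s, #|[set i | L i j == s]| = 1%N).

Definition Cmat (n : nat) (W : 'M[int]_n) (s : nat) : 'M[int]_n :=
  match (insub s : option 'I_n) with
  | Some c => col c W *m (col c W)^T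
  | None => 0
  end.

Lemma blk_lt (t n : nat) (p : 'I_(t * n)) : (p %/ n < t)%N.
Proof.
case: n p => [|n] [p hp] /=; first by rewrite muln0 in hp.
by rewrite ltn_divLR.
Qed.

Lemma inn_lt (t n : nat) (p : 'I_(t * n)) : (p %% n < n)%N.
Proof.
case: n p => [|n] [p hp] /=; first by rewrite muln0 in hp.
by rewrite ltn_mod.
Qed.

(* Row/column index p of the tn x tn matrix is p = i*n + a with block index
   i = p %/ n and inner index a = p %% n. *)
Definition blockW (n t : nat) (W : 'M[int]_n) (L : 'M['I_t]_t) : 'M[int]_(t * n) :=
  \matrix_(p, q)
    Cmat W (L (Ordinal (blk_lt p)) (Ordinal (blk_lt q)))
      (Ordinal (inn_lt p)) (Ordinal (inn_lt q)).

From mathcomp Require Import all_boot all_order all_algebra.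
From mathcomp Require Import ring.
Set Implicit Arguments. Unset Strict Implicit. Unset Printing Implicit Defensive.
Import GRing.Theory Num.Theory.
Local Open Scope ring_scope.

(* With [C_s := w_s w_s^T], orthogonality of the columns of [W] gives
   [C_s C_u^T = k [s = u] C_s].  Block row [i] of [W~ W~^T] against block row
   [i'] is [sum_j C_(l(i,j)) C_(l(i',j))^T]: for [i <> i'] the symbols
   [l(i,j)] and [l(i',j)] always differ, so it vanishes; for [i = i'] the
   symbols [l(i,j)] run over all of [{1..t}], so it equals
   [k sum_s C_s = k W W^T = k^2 I]. *)

Lemma mulmx_trmx_eq0 (R : realDomainType) (m n : nat) (A : 'M[R]_(m, n)) :
  A *m A^T = 0 -> A = 0.
Proof.
move=> AAt0; apply/matrixP => i j; rewrite mxE.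
have /eqP := congr1 (fun M : 'M[R]_m => M i i) AAt0.
rewrite !mxE psumr_eq0 => [/allP/(_ j (mem_index_enum _))|l _]; last first.
  by rewrite mxE -expr2 sqr_ge0.
by rewrite /= mxE -expr2 sqrf_eq0 => /eqP.
Qed.

(* [k = 0] forces [W = 0]; for [k > 0] pass to the rationals, where
   [k^-1 W^T] is a right, hence left, inverse of [W]. *)
Lemma mulmx_trmx_scalarC (n k : nat) (W : 'M[int]_n) :
  W *m W^T = (k%:Z)%:M -> W^T *m W = (k%:Z)%:M.
Proof.
move=> WWt; have [k0|k_neq0] := eqVneq k 0%N.
  have zero_mx : (0%:Z)%:M = 0 :> 'M[int]_n by apply/matrixP => i j; rewrite !mxE mul0rn.
  by move: WWt; rewrite k0 zero_mx => /mulmx_trmx_eq0->; rewrite mulmx0.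
pose V := map_mx (intr : int -> rat) W.
have k_unit : (k%:R : rat) != 0 by rewrite pnatr_eq0.
have VVt : V *m ((k%:R : rat)^-1 *: V^T) = 1%:M.
  rewrite -scalemxAr /V map_trmx -map_mxM WWt map_scalar_mx /= -scalemx1.
  by rewrite scalerA mulVf ?scale1r.
have VtV : V^T *m V = (k%:R : rat)%:M.
  have := mulmx1C VVt; rewrite -scalemxAl => VtV_scaled.
  by rewrite -scalemx1 -VtV_scaled scalerA divff // scale1r.
apply/matrixP => i j; apply: (@intr_inj rat).
have := congr1 (fun M : 'M[rat]_n => M i j) VtV.
by rewrite /V map_trmx -map_mxM !mxE rmorphMn.
Qed.

Lemma weight_entryM (x y : int) :
  x \in [:: 1; -1; 0] -> y \in [:: 1; -1; 0] -> x * y \in [:: 1; -1; 0].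
Proof. by rewrite !inE => /or3P[]/eqP-> /or3P[]/eqP->. Qed.

Section OuterProducts.

Variables (n : nat) (W : 'M[int]_n).

Lemma Cmat_ord (x : 'I_n) a b : Cmat W x a b = W a x * W b x.
Proof. by rewrite /Cmat valK !mxE big_ord1 !mxE. Qed.

Lemma Cmat_out (s : nat) : (n <= s)%N -> Cmat W s = 0.
Proof. by move=> ns; rewrite /Cmat insubN // -leqNgt. Qed.

Lemma Cmat_entry (s : nat) a b :
  (forall i j, W i j \in [:: 1; -1; 0]) -> Cmat W s a b \in [:: 1; -1; 0].
Proof.
move=> W_entry; have [sn|ns] := ltnP s n; last by rewrite Cmat_out // mxE !inE.
by rewrite -[s]/(val (Ordinal sn)) Cmat_ord weight_entryM.
Qed.

Lemma sum_Cmat (t : nat) a b :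
  (n <= t)%N -> \sum_(s < t) Cmat W s a b = (W *m W^T) a b.
Proof.
move=> nt; rewrite mxE (eq_bigr (fun c : 'I_n => Cmat W c a b)) => [|c _]; last first.
  by rewrite Cmat_ord mxE.
rewrite (big_ord_widen t (fun s => Cmat W s a b) nt) [RHS]big_mkcond /=.
by apply: eq_bigr => s _; case: ltnP => // /Cmat_out->; rewrite mxE.
Qed.

Variable k : nat.
Hypothesis WtW : W^T *m W = (k%:Z)%:M.

Lemma Cmat_mul_tr (s u : nat) a b :
  \sum_c Cmat W s a c * Cmat W u b c = k%:Z *+ (s == u) * Cmat W s a b.
Proof.
have [sn|ns] := ltnP s n; last first.
  by rewrite Cmat_out // mxE mulr0 big1 // => c _; rewrite mxE mul0r.
have [un|nu] := ltnP u n; last first.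
  rewrite big1 => [|c _]; last by rewrite (Cmat_out nu) mxE mulr0.
  by rewrite (_ : s == u = false) ?mul0r //; apply: contraTF nu => /eqP<-; rewrite -ltnNge.
rewrite -[s]/(val (Ordinal sn)) -[u]/(val (Ordinal un)) (inj_eq val_inj).
set x := Ordinal sn; set y := Ordinal un.
transitivity (W a x * W b y * (W^T *m W) x y).
  rewrite mxE big_distrr; apply: eq_bigr => c _; rewrite !Cmat_ord !mxE /=; ring.
by rewrite WtW mxE Cmat_ord; case: eqP => [->|_]; rewrite ?mulr0n ?mulr1n; ring.
Qed.

End OuterProducts.

Lemma inj_card_fiber1 (T : finType) (U : eqType) (f : T -> U) :
  (forall s, #|[set x | f x == s]| = 1%N) -> injective f.
Proof.
move=> fiber1 x1 x2 fx12; have /eqP/cards1P[x S1] := fiber1 (f x1).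
have : x1 \in [set x | f x == f x1] by rewrite inE.
have : x2 \in [set x | f x == f x1] by rewrite inE fx12.
by rewrite S1 !inE => /eqP-> /eqP->.
Qed.

Section BlockIndices.

Variables t n : nat.

Lemma pair_idx_lt (j : 'I_t) (c : 'I_n) : (j * n + c < t * n)%N.
Proof.
apply: (@leq_trans (j.+1 * n)); first by rewrite mulSn addnC ltn_add2r.
by rewrite leq_mul2r ltn_ord orbT.
Qed.

Definition pair_idx (j : 'I_t) (c : 'I_n) : 'I_(t * n) := Ordinal (pair_idx_lt j c).

Definition blk (p : 'I_(t * n)) : 'I_t := Ordinal (blk_lt p).
Definition inn (p : 'I_(t * n)) : 'I_n := Ordinal (inn_lt p).

Lemma blk_pair_idx (j : 'I_t) (c : 'I_n) : blk (pair_idx j c) = j.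
Proof.
apply: val_inj => /=; have n_gt0 : (0 < n)%N by apply: leq_ltn_trans (ltn_ord c).
by rewrite divnMDl // divn_small ?addn0.
Qed.

Lemma inn_pair_idx (j : 'I_t) (c : 'I_n) : inn (pair_idx j c) = c.
Proof. by apply: val_inj; rewrite /= modnMDl modn_small. Qed.

Lemma pair_idxK (p : 'I_(t * n)) : pair_idx (blk p) (inn p) = p.
Proof. by apply: val_inj; rewrite /= -divn_eq. Qed.

Lemma sum_pair_idx (F : 'I_(t * n) -> int) :
  \sum_p F p = \sum_(j < t) \sum_(c < n) F (pair_idx j c).
Proof.
rewrite pair_big (reindex (fun x : 'I_t * 'I_n => pair_idx x.1 x.2)) //=.
exists (fun p => (blk p, inn p)) => [[j c] _|p _]; last exact: pair_idxK.
by rewrite blk_pair_idx inn_pair_idx.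
Qed.

Lemma eq_idx (p q : 'I_(t * n)) : (p == q) = (blk p == blk q) && (inn p == inn q).
Proof.
apply/eqP/andP => [->|[/eqP bpq /eqP ipq]]; first by rewrite !eqxx.
by rewrite -(pair_idxK p) -(pair_idxK q) bpq ipq.
Qed.

End BlockIndices.

Lemma blockW_entry (n t : nat) (W : 'M[int]_n) (L : 'M['I_t]_t) p q :
  blockW W L p q = Cmat W (L (blk p) (blk q)) (inn p) (inn q).
Proof. by rewrite mxE. Qed.

Lemma blockW_mul_tr_entry (n k t : nat) (W : 'M[int]_n) (L : 'M['I_t]_t) p q :
  W^T *m W = (k%:Z)%:M ->
  (blockW W L *m (blockW W L)^T) p q =
  \sum_j k%:Z *+ (L (blk p) j == L (blk q) j) * Cmat W (L (blk p) j) (inn p) (inn q).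
Proof.
move=> WtW; rewrite mxE sum_pair_idx; apply: eq_bigr => j _.
rewrite -Cmat_mul_tr //; apply: eq_bigr => c _.
by rewrite [(blockW W L)^T _ _]mxE !blockW_entry blk_pair_idx inn_pair_idx.
Qed.

Theorem lemma3p2 (n k : nat) (W : 'M[int]_n) (t : nat) (L : 'M['I_t]_t) :
  is_weighing W k -> (n <= t)%N -> latin_square L ->
  is_weighing (blockW W L) (k ^ 2).
Proof.
move=> [W_entry WWt] nt [L_row L_col].
split=> [p q|]; first by rewrite blockW_entry Cmat_entry.
have WtW := mulmx_trmx_scalarC WWt.
apply/matrixP => p q; rewrite (blockW_mul_tr_entry _ _ _ WtW) mxE eq_idx.
have [<-|bpq] /= := eqVneq (blk p) (blk q); last first.
  rewrite mulr0n big1 // => j _.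
  have /inj_card_fiber1/inj_eq-> := L_col j.
  by rewrite (negbTE bpq) mul0r.
under eq_bigr do rewrite eqxx mulr1n.
have row_perm : \sum_j Cmat W (L (blk p) j) (inn p) (inn q) =
                \sum_(s < t) Cmat W s (inn p) (inn q).
  exact/esym/(reindex_inj (inj_card_fiber1 (L_row (blk p)))).
by rewrite -big_distrr /= row_perm sum_Cmat // WWt mxE mulrnAr -PoszM mulnn.
Qed.
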